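(* Let $n\ge 2$ and let $C_n$ be the cycle graph with vertices $p_1,\dots,p_n$ and edges $e_i$ joining $p_i$ and $p_{i+1}$ (indices mod $n$). For each $i$ let $G_i$ be a connected graph with two given distinct vertices $s_i,t_i$. Let $CG_n$ be the graph obtained from $C_n$ by replacing each edge $e_i$ by a copy of $G_i$, identifying $s_i$ with $p_i$ and $t_i$ with $p_{i+1}$ (the copies being otherwise disjoint). Then $$t(CG_n)=\prod_{i=1}^n t(G_i)\sum_{i=1}^n\frac{t(G_{i,s_it_i})}{t(G_i)},$$ where $G_{i,s_it_i}$ is obtained from $G_i$ by identifying $s_i$ and $t_i$. In particular, if each $G_i$ is a copy of the same graph $G$ with fixed vertices $s,t$, then $t(CG_n)=n\,t(G)^{n-1}\,t(G_{st})$.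
   Context: Graphs are finite and may have multiple edges and loops; $t(H)$ is the number of spanning trees of $H$ (a one-vertex graph has $t=1$). $G_{st}$ is obtained from $G$ by identifying $s$ and $t$. *)

From HB Require Import structures.
From mathcomp Require Import all_boot all_order all_algebra.
Set Implicit Arguments. Unset Strict Implicit. Unset Printing Implicit Defensive.
Import GRing.Theory Num.Theory.

(* A finite multigraph (multiple edges and loops allowed): a finite vertex
   type, a finite edge type, and the pair of endpoints of each edge
   (recorded as an ordered pair; the order is irrelevant below). *)
Record mgraph := MGraph {
  vert : finType;
  edge : finType;
  ends : edge -> vert * vert
}.

Definition adj (G : mgraph) (F : {set edge G}) : rel (vert G) :=
  fun x y => [exists e in F, (ends e == (x, y)) || (ends e == (y, x))].

Definition spans_connected (G : mgraph) (F : {set edge G}) : bool :=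
  [forall x : vert G, forall y : vert G, connect (adj F) x y].

Definition acyclic (G : mgraph) (F : {set edge G}) : bool :=
  [forall e in F, ~~ connect (adj (F :\ e)) (ends e).1 (ends e).2].

Definition spanning_tree (G : mgraph) (F : {set edge G}) : bool :=
  spans_connected F && acyclic F.

Definition connected (G : mgraph) : Prop := spans_connected [set: edge G].

Definition ntrees (G : mgraph) : nat :=
  #|[set F : {set edge G} | spanning_tree F]|.

(* G_{st}: identify s and t.  Vertices: None is the merged vertex,
   Some v is an old vertex v different from s and t; edges unchanged. *)
Section Identify.
Variables (G : mgraph) (s t : vert G).
Definition id_vert : finType := option {v : vert G | (v != s) && (v != t)}.
Definition id_map (v : vert G) : id_vert :=
  match insub v with Some w => Some w | None => None end.
Definition identify : mgraph :=
  @MGraph id_vert (edge G) (fun e => (id_map (ends e).1, id_map (ends e).2)).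
End Identify.

(* Vertices: inl i is p_i; inr (i, v) is an inner vertex v of
   G i (v different from s i and t i). *)
Section Necklace.
Variables (n : nat) (G : 'I_n -> mgraph)
          (s t : forall i, vert (G i)).
Definition inner (i : 'I_n) : finType :=
  {v : vert (G i) | (v != s i) && (v != t i)}.
Definition neck_vert : finType := ('I_n + {i : 'I_n & inner i})%type.
Definition neck_edge : finType := {i : 'I_n & edge (G i)}.
Definition neck_map (i : 'I_n) (v : vert (G i)) : neck_vert :=
  if v == s i then inl i
  else if v == t i then inl (ordS i)
  else match @insub _ (fun v => (v != s i) && (v != t i)) (inner i) v with
       | Some w => inr (Tagged inner w)
       | None => inl i (* unreachable *)
       end.
Definition neck_ends (x : neck_edge) : neck_vert * neck_vert :=
  (neck_map (ends (tagged x)).1, neck_map (ends (tagged x)).2).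
Definition necklace : mgraph := @MGraph neck_vert neck_edge neck_ends.
End Necklace.

From HB Require Import structures.
From mathcomp Require Import all_boot all_order all_algebra.
From mathcomp Require Import zify.
Import GRing.Theory Num.Theory.
Set Implicit Arguments. Unset Strict Implicit. Unset Printing Implicit Defensive.

(* Restricting an edge set F of CG_n to the copies is a bijection onto the
   families (F_i)_i.  F is a spanning tree exactly when, for a unique i, F_i is
   a spanning forest of G_i with two components separating s_i from t_i and
   every other F_j is a spanning tree of G_j: going around the cycle, the
   copies whose F_j joins s_j to t_j link consecutive pins p_j, p_(j+1), so
   connectivity allows at most one missing link and acyclicity forbids having
   none.  The two-component forests separating s and t are exactly the
   spanning trees of G_st, whence
   t(CG_n) = sum_i t(G_(i,s_i t_i)) * prod_(j <> i) t(G_j). *)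

Section Connect.
Variables (T T' : finType) (r : rel T).

Lemma connect_homo (r' : rel T') (f : T -> T') :
  (forall x y, r x y -> connect r' (f x) (f y)) ->
  forall x y, connect r x y -> connect r' (f x) (f y).
Proof.
move=> fr x y /connectP[p]; elim: p x => [x _ ->|z p IH x /= /andP[rxz pz] ly].
  exact: connect0.
exact: connect_trans (fr _ _ rxz) (IH _ pz ly).
Qed.

Lemma connect_stable (P : pred T) x y :
  (forall a b, r a b -> P a -> P b) -> connect r x y -> P x -> P y.
Proof.
move=> Pr /connectP[p]; elim: p x => [x _ -> //|z p IH x /= /andP[rxz pz] ly Px].
exact: IH pz ly (Pr _ _ rxz Px).
Qed.

End Connect.

Section Multigraph.
Variable G : mgraph.
Implicit Types (F A : {set edge G}) (x y a b : vert G) (e : edge G).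

Lemma adjC F x y : adj F x y = adj F y x.
Proof. by apply/eq_existsb => e; rewrite orbC. Qed.

Lemma connect_adjC F x y : connect (adj F) x y = connect (adj F) y x.
Proof. by apply: sym_connect_sym => a b; exact: adjC. Qed.

Lemma adj_ends F e : e \in F -> adj F (ends e).1 (ends e).2.
Proof. by move=> eF; apply/existsP; exists e; rewrite eF -surjective_pairing eqxx. Qed.

Lemma adjP F x y : adj F x y ->
  exists2 e, e \in F & (ends e = (x, y)) \/ (ends e = (y, x)).
Proof. by move=> /existsP[e /andP[eF /orP[/eqP|/eqP]]]; exists e => //; [left|right]. Qed.

Lemma adj_subset F F' x y : F \subset F' -> adj F x y -> adj F' x y.
Proof.
by move=> sF /existsP[e /andP[eF h]]; apply/existsP; exists e; rewrite (subsetP sF _ eF).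
Qed.

Lemma connect_subset F F' x y :
  F \subset F' -> connect (adj F) x y -> connect (adj F') x y.
Proof. by move=> sF; apply: connect_sub => a b /(adj_subset sF); apply: connect1. Qed.

Lemma connect_set0 x y : connect (adj (set0 : {set edge G})) x y -> x = y.
Proof.
move=> c; apply/esym/eqP; apply: (@connect_stable _ _ (pred1 x)) c _ => //= a b.
by case/existsP=> e; rewrite inE.
Qed.

Lemma spans_connectedP F :
  reflect (forall x y, connect (adj F) x y) (spans_connected F).
Proof.
apply: (iffP forallP) => [c x y|c x]; first by have /forallP := c x; apply.
by apply/forallP.
Qed.

Lemma spans_connected_hub F z :
  (forall x, connect (adj F) x z) -> spans_connected F.
Proof.
move=> c; apply/spans_connectedP => x y.
by apply: connect_trans (c x) _; rewrite connect_adjC.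
Qed.

Lemma acyclicP F :
  reflect (forall e, e \in F -> ~~ connect (adj (F :\ e)) (ends e).1 (ends e).2)
          (acyclic F).
Proof.
by apply: (iffP forallP) => h e; [move=> eF; have /implyP := h e; apply | apply/implyP/h].
Qed.

Lemma connect_first_edge F x y : x != y -> connect (adj F) x y ->
  exists e v, [/\ e \in F, (ends e = (x, v)) \/ (ends e = (v, x))
                & connect (adj (F :\ e)) v y].
Proof.
move=> xy /connectP[p pp ey]; subst y.
case: (shortenP pp) xy => p' pp' up' _ {pp p}.
case: p' pp' up' => [|v p'] /=; first by rewrite eqxx.
case/andP=> /adjP[e eF He] pp' /and3P[xnin _ _] _.
exists e, v; split => //; apply/connectP; exists p' => //.
apply: (@sub_in_path _ (predC1 x)) pp'; last first.
  by apply/allP => z zin /=; apply: contraNneq xnin => <-.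
move=> a b; rewrite !inE => ax bx /existsP[e' /andP[e'F h]].
apply/existsP; exists e'; rewrite !inE e'F h !andbT.
apply/eqP=> ee; subst e'.
by case: He => E; case/orP: h; rewrite E => /eqP[] ? ?; subst; rewrite ?eqxx in ax bx.
Qed.

Lemma connect_setD1 F e : e \in F ->
  connect (adj (F :\ e)) (ends e).1 (ends e).2 ->
  forall x y, connect (adj F) x y -> connect (adj (F :\ e)) x y.
Proof.
move=> eF c; apply: connect_sub => a b /existsP[e' /andP[e'F h]].
have [ee|ne] := eqVneq e' e.
  by subst e'; case/orP: h => /eqP E; rewrite E /= in c => //; rewrite connect_adjC.
by apply: connect1; apply/existsP; exists e'; rewrite !inE ne e'F.
Qed.

(* A connected spanning edge set of minimum size is acyclic. *)
Lemma ntrees_gt0 : connected G -> 0 < ntrees G.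
Proof.
move=> cG; have [F0 cF0 minF0] := arg_minnP (fun F : {set edge G} => #|F|) cG.
rewrite /ntrees card_gt0; apply/set0Pn; exists F0; rewrite inE /spanning_tree cF0.
apply/acyclicP => e eF; apply/negP => c.
have /minF0 : spans_connected (F0 :\ e).
  by move/spans_connectedP: cF0 => cF0; apply/spans_connectedP => x y; apply: connect_setD1.
by rewrite (cardsD1 e F0) eF ltnn.
Qed.

Definition reaches F a b x := connect (adj F) x a || connect (adj F) x b.

Lemma reaches_end F a b x : (x == a) || (x == b) -> reaches F a b x.
Proof. by case/orP => /eqP->; rewrite /reaches connect0 ?orbT. Qed.

Lemma reaches_connect F a b x y :
  connect (adj F) x y -> reaches F a b y -> reaches F a b x.
Proof. by rewrite /reaches => c /orP[] /(connect_trans c) ->; rewrite ?orbT. Qed.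

Lemma spans_connected_reaches F a b :
  connect (adj F) a b -> (forall x, reaches F a b x) -> spans_connected F.
Proof.
move=> ab r; apply: (spans_connected_hub (z := b)) => x.
by case/orP: (r x) => // xa; apply: connect_trans xa ab.
Qed.

Lemma reaches_split F F' a b x y : F \subset F' -> connect (adj F') x y ->
  reaches F a b x -> reaches F a b y ->
  connect (adj F) x y || connect (adj F') a b.
Proof.
move=> sF xy; rewrite /reaches => /orP[] xc /orP[] yc; apply/orP.
- by left; rewrite connect_adjC in yc; apply: connect_trans xc yc.
- right; rewrite connect_adjC in xc.
  exact: connect_trans (connect_trans (connect_subset sF xc) xy) (connect_subset sF yc).
- right; rewrite connect_adjC in yc; rewrite connect_adjC in xy.
  exact: connect_trans (connect_trans (connect_subset sF yc) xy) (connect_subset sF xc).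
- by left; rewrite connect_adjC in yc; apply: connect_trans xc yc.
Qed.

Definition separating_forest F a b :=
  [&& acyclic F, ~~ connect (adj F) a b & [forall x, reaches F a b x]].

End Multigraph.

Section Identify.
Variables (G : mgraph) (s t : vert G).
Local Notation H := (identify s t).
Local Notation im := (@id_map G s t).
Implicit Types (A : {set edge G}) (a b x y : vert G).

Lemma id_map_s : im s = None.
Proof. by rewrite /id_map insubN // eqxx. Qed.

Lemma id_map_t : im t = None.
Proof. by rewrite /id_map insubN // eqxx andbF. Qed.

Lemma id_map_surj (u : vert H) : exists a, im a = u.
Proof. by case: u => [w|]; [exists (val w); rewrite /id_map valK | exists s; exact: id_map_s]. Qed.

Lemma id_map_eq a b : im a = im b ->
  a = b \/ ((a == s) || (a == t)) && ((b == s) || (b == t)).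
Proof.
rewrite /id_map; case: insubP => [w _ <-|ha]; case: insubP => [w' _ <-|hb] //=.
- by move=> [->]; left.
- by move=> _; right; move: ha hb; rewrite !negb_and !negbK => -> ->.
Qed.

Lemma adj_identify A a b : adj A a b -> @adj H A (im a) (im b).
Proof.
by move=> /existsP[e /andP[eA /orP[/eqP E|/eqP E]]]; apply/existsP; exists e;
   rewrite eA /= E eqxx ?orbT.
Qed.

Lemma connect_identify A a b :
  connect (adj A) a b -> connect (@adj H A) (im a) (im b).
Proof. by apply: connect_homo => x y /adj_identify; exact: connect1. Qed.

Lemma connect_identify_stable A (R : pred (vert G)) a b :
  (forall x y, adj A x y -> R x -> R y) ->
  (forall x y, im x = im y -> R x -> R y) ->
  connect (@adj H A) (im a) (im b) -> R a -> R b.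
Proof.
move=> Radj Rim c Ra; pose P u := [exists x, (im x == u) && R x].
have /existsP[x /andP[/eqP xb Rx]] : P (im b).
  apply: connect_stable c _; last by apply/existsP; exists a; rewrite eqxx.
  move=> u w /existsP[e /andP[eA h]] /existsP[x /andP[/eqP xu Rx]].
  have e12 : adj A (@ends G e).1 (@ends G e).2 := @adj_ends G A e eA.
  have e21 : adj A (@ends G e).2 (@ends G e).1 by rewrite adjC.
  case/orP: h => /eqP[E1 E2]; apply/existsP.
  - exists (@ends G e).2; rewrite E2 eqxx; apply: Radj e12 _.
    by apply: Rim Rx; rewrite xu E1.
  - exists (@ends G e).1; rewrite E1 eqxx; apply: Radj e21 _.
    by apply: Rim Rx; rewrite xu E2.
exact: Rim xb Rx.
Qed.

Lemma connect_identify_lift A a b : connect (@adj H A) (im a) (im b) ->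
  connect (adj A) a b || reaches A s t a && reaches A s t b.
Proof.
move=> c; pose R x := connect (adj A) a x || reaches A s t a && reaches A s t x.
apply: (connect_identify_stable (R := R)) c _ => [x y xy|x y|]; rewrite /R.
- case/orP=> [ax|/andP[ra rx]]; first by rewrite (connect_trans ax (connect1 xy)).
  by rewrite ra (@reaches_connect _ _ _ _ _ x) ?orbT // connect1 // adjC.
- case/id_map_eq=> [<- //|/andP[xst yst]].
  case/orP=> [ax|/andP[ra _]]; last by rewrite ra reaches_end ?orbT.
  by rewrite (reaches_connect ax (reaches_end A xst)) reaches_end ?orbT.
- by rewrite connect0.
Qed.

Lemma spans_connected_identify A :
  @spans_connected H A = [forall x, reaches A s t x].
Proof.
apply/idP/forallP => [/spans_connectedP c x|r].
  have := connect_identify_lift (c (im x) (im s)).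
  by case/orP=> [xs|/andP[] //]; rewrite /reaches xs.
apply: (@spans_connected_hub H A None) => u; have [a <-] := id_map_surj u.
case/orP: (r a) => c; [rewrite -id_map_s | rewrite -id_map_t]; exact: connect_identify c.
Qed.

Lemma acyclic_identify A : s != t ->
  @acyclic H A = acyclic A && ~~ connect (adj A) s t.
Proof.
move=> st; apply/idP/andP => [acH|[acA nst]].
  split.
    apply/acyclicP => e eA; apply: contra (acyclicP _ acH e eA).
    exact: connect_identify.
  apply/negP => /(connect_first_edge st) [e [v [eA He cv]]].
  have := connect_identify cv; rewrite id_map_t -id_map_s => c.
  apply: (negP (acyclicP _ acH e eA)) => /=.
  by case: He => -> //=; rewrite (@connect_adjC H).
apply/acyclicP => e eA; apply/negP => /connect_identify_lift.
case/orP => [c|/andP[r1 r2]]; first by have := acyclicP _ acA e eA; rewrite c.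
have sub : A :\ e \subset A := subD1set A e.
have c12 : connect (adj A) (@ends G e).1 (@ends G e).2.
  exact/connect1/(@adj_ends G).
case/orP: (reaches_split sub c12 r1 r2) => [c|]; last by rewrite (negbTE nst).
by have := acyclicP _ acA e eA; rewrite c.
Qed.

Lemma spanning_tree_identify A : s != t ->
  @spanning_tree H A = separating_forest A s t.
Proof.
move=> st; rewrite /spanning_tree spans_connected_identify acyclic_identify //.
by rewrite /separating_forest andbC -andbA.
Qed.

End Identify.

Section Cycle.
Variable n : nat.
Implicit Types (S : pred 'I_n) (i j k l : 'I_n).

Definition cyc S : rel 'I_n :=
  fun k l => (S k && (l == ordS k)) || (S l && (k == ordS l)).

(* Number of steps from [ordS i] to [k] along the cycle. *)
Definition cdist i k : nat := if i < k then k - i.+1 else k + n - i.+1.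

Lemma val_ordS k : (ordS k : nat) = if k.+1 == n then 0 else k.+1.
Proof.
have := ltn_ord k; rewrite /= /ordS /=; case: eqP => [->|kn] kn'.
  by rewrite modnn.
by rewrite modn_small //; lia.
Qed.

Lemma cdist_ordS i k : k != i -> cdist i (ordS k) = (cdist i k).+1.
Proof.
rewrite -(inj_eq (@ord_inj n)) /cdist val_ordS; have := ltn_ord i; have := ltn_ord k.
by repeat case: ifP; lia.
Qed.

Lemma cdist_eq0 i k : (cdist i k == 0) = (k == ordS i).
Proof.
rewrite -(inj_eq (@ord_inj n)) /cdist val_ordS /=; have := ltn_ord i; have := ltn_ord k.
by repeat case: ifP; lia.
Qed.

Lemma cdist_ordS_self i : cdist i (ordS i) = 0.
Proof. by apply/eqP; rewrite cdist_eq0. Qed.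

Lemma cdist_lt_self i k : k != i -> cdist i k < cdist i i.
Proof.
rewrite -(inj_eq (@ord_inj n)) /cdist; have := ltn_ord i; have := ltn_ord k.
by repeat case: ifP; lia.
Qed.

Lemma cdist_inj i : injective (cdist i).
Proof.
move=> k l; rewrite /cdist => E; apply: ord_inj; move: E.
have := ltn_ord i; have := ltn_ord k; have := ltn_ord l.
by repeat case: ifP; lia.
Qed.

Lemma cycC S : symmetric (cyc S).
Proof. by move=> k l; rewrite /cyc orbC. Qed.

(* The arc from [ordS i] to [j] is closed under the remaining edges. *)
Lemma connect_cyc_gap S i j : i != j -> ~~ S i -> ~~ S j ->
  ~~ connect (cyc S) i (ordS i).
Proof.
move=> ij Si Sj; rewrite (sym_connect_sym (@cycC S)); apply/negP => c.
have : cdist i i <= cdist i j.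
  apply: (@connect_stable _ _ (fun k => cdist i k <= cdist i j)) c _; last first.
    by rewrite cdist_ordS_self.
  have neq k : S k -> (k != i) && (k != j).
    by move=> Sk; apply/andP; split; apply: contraTneq Sk => ->.
  move=> a b /orP[/andP[Sa /eqP ->]|/andP[Sb /eqP ->]].
  - have /andP[ai aj] := neq a Sa; rewrite cdist_ordS // ltn_neqAle => ->.
    by rewrite andbT (inj_eq (@cdist_inj i)).
  - by have /andP[bi _] := neq b Sb; rewrite cdist_ordS //; apply: ltnW.
by rewrite leqNgt cdist_lt_self // eq_sym.
Qed.

Lemma connect_cyc_all S i0 : (forall k, k != i0 -> S k) ->
  forall k l, connect (cyc S) k l.
Proof.
move=> hS; suff from_ordS k : connect (cyc S) (ordS i0) k.
  move=> k l; apply: connect_trans (from_ordS l).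
  by rewrite (sym_connect_sym (@cycC S)).
elim: {k}(cdist i0 k) {-2}k (erefl (cdist i0 k)) => [|m IH] k dk.
  by move/eqP: dk; rewrite cdist_eq0 => /eqP->.
have k'i0 : ord_pred k != i0.
  by apply/eqP => E; move: dk; rewrite -(ord_predK k) E cdist_ordS_self.
apply: connect_trans (IH (ord_pred k) _) (connect1 _).
  by apply/succn_inj; rewrite -cdist_ordS // ord_predK.
by rewrite /cyc hS // ord_predK eqxx.
Qed.

End Cycle.

Lemma card_set_nat (T : finType) (P : pred T) : #|[set x | P x]| = \sum_x (P x : nat).
Proof. by rewrite -sum1dep_card big_mkcond; apply: eq_bigr => x _; case: (P x). Qed.

Section Necklace.
Variables (n : nat) (G : 'I_n -> mgraph) (s t : forall i, vert (G i)).
Hypothesis st : forall i, s i != t i.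
Local Notation CG := (@necklace n G s t).
Local Notation nm i := (@neck_map n G s t i).
Local Notation inner := (@inner n G s t).
Implicit Types (F : {set edge CG}) (x y : vert CG) (i j k : 'I_n).

Definition is_inner i (a : vert (G i)) := (a != s i) && (a != t i).

Definition copy_edge i (e : edge (G i)) : edge CG := Tagged (fun j => edge (G j)) e.

Definition restr F i : {set edge (G i)} := [set e | copy_edge e \in F].

Lemma neck_map_s i : nm i (s i) = inl i.
Proof. by rewrite /neck_map eqxx. Qed.

Lemma neck_map_t i : nm i (t i) = inl (ordS i).
Proof. by rewrite /neck_map eq_sym (negbTE (st i)) eqxx. Qed.

Lemma neck_map_val i (w : inner i) : nm i (val w) = inr (Tagged inner w).
Proof. by have /andP[ws wt] := valP w; rewrite /neck_map (negbTE ws) (negbTE wt) valK. Qed.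

Lemma neck_map_inner i a (ia : is_inner a) :
  nm i a = inr (Tagged inner (Sub a ia : inner i)).
Proof. exact: (neck_map_val (Sub a ia)). Qed.

Lemma neck_map_surj x : exists i a, nm i a = x.
Proof.
case: x => [k|[i w]]; first by exists k, (s k); exact: neck_map_s.
by exists i, (val w); exact: neck_map_val.
Qed.

Lemma eq_neck_map (T : Type) i (f : vert CG -> T) (g : vert (G i) -> T) :
  f (inl i) = g (s i) -> f (inl (ordS i)) = g (t i) ->
  (forall a, is_inner a -> f (nm i a) = g a) -> forall a, f (nm i a) = g a.
Proof.
move=> fs ft fin a; case: (eqVneq a (s i)) => [->|as_]; first by rewrite neck_map_s.
case: (eqVneq a (t i)) => [->|at_]; first by rewrite neck_map_t.
by apply: fin; rewrite /is_inner as_ at_.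
Qed.

Lemma neck_map_inner_eq i j (a : vert (G i)) (b : vert (G j)) : is_inner a ->
  nm i a = nm j b -> Tagged (fun k => vert (G k)) a = Tagged (fun k => vert (G k)) b.
Proof.
move=> ia; rewrite (neck_map_inner ia).
case: (eqVneq b (s j)) => [->|bs]; first by rewrite neck_map_s.
case: (eqVneq b (t j)) => [->|bt]; first by rewrite neck_map_t.
have ib : is_inner b by rewrite /is_inner bs bt.
rewrite (neck_map_inner ib).
by move/(congr1 (fun y : vert CG =>
  if y is inr z then Tagged (fun k => vert (G k)) (val (tagged z))
                 else Tagged (fun k => vert (G k)) a)).
Qed.

Definition neck_proj k x : option (vert (G k)) := [pick a | (nm k a == x) && is_inner a].

Lemma neck_proj_map k a : is_inner a -> neck_proj k (nm k a) = Some a.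
Proof.
move=> ia; rewrite /neck_proj; case: pickP => [b /andP[/eqP E ib]|/(_ a)].
  by rewrite (eq_from_Tagged (neck_map_inner_eq ib E)).
by rewrite eqxx ia.
Qed.

Lemma neck_proj_other k j b : j != k -> neck_proj k (nm j b) = None.
Proof.
move=> jk; rewrite /neck_proj; case: pickP => // a /andP[/eqP E ia].
by move/(congr1 tag): (neck_map_inner_eq ia E) => /= kj; rewrite kj eqxx in jk.
Qed.

Lemma neck_proj_pin k m : neck_proj k (inl m) = None.
Proof. by rewrite /neck_proj; case: pickP => // a /andP[/eqP + ia]; rewrite neck_map_inner. Qed.

Lemma in_restr F i (e : edge (G i)) : (e \in restr F i) = (copy_edge e \in F).
Proof. by rewrite inE. Qed.

Lemma restr_setD1 F i (e : edge (G i)) : restr (F :\ copy_edge e) i = restr F i :\ e.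
Proof. by apply/setP => e'; rewrite !inE (inj_eq (@eq_from_Tagged _ _ _)). Qed.

Lemma restr_setD1_other F i j (e : edge (G i)) :
  j != i -> restr (F :\ copy_edge e) j = restr F j.
Proof.
move=> ji; apply/setP => e'; rewrite !inE; case: eqP => [/(congr1 tag) /= E|//].
by rewrite E eqxx in ji.
Qed.

Lemma adj_restr F i a b : adj (restr F i) a b -> adj F (nm i a) (nm i b).
Proof.
by move=> /existsP[e /andP[eF /orP[/eqP E|/eqP E]]]; apply/existsP; exists (copy_edge e);
   rewrite -in_restr eF /= /neck_ends /= E eqxx ?orbT.
Qed.

Lemma connect_restr F i a b :
  connect (adj (restr F i)) a b -> connect (adj F) (nm i a) (nm i b).
Proof. by apply: connect_homo => x y /adj_restr; apply: connect1. Qed.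

Lemma adj_necklaceP F x y : adj F x y ->
  exists i a b, [/\ adj (restr F i) a b, x = nm i a & y = nm i b].
Proof.
move=> /adjP [[i e] eF [E|E]]; move: E => -[<- <-];
  have eF' : e \in restr F i by rewrite in_restr.
  by exists i, (ends e).1, (ends e).2; split => //; apply: adj_ends.
by exists i, (ends e).2, (ends e).1; split => //; rewrite adjC; apply: adj_ends.
Qed.

Definition bridges F i := connect (adj (restr F i)) (s i) (t i).

(* The pin [p_k] to which a vertex is attached inside its copy: [p_i] or
   [p_(i+1)] for an inner vertex of copy [i]. *)
Definition anchor F x : 'I_n :=
  match x with
  | inl k => k
  | inr y => if connect (adj (restr F (tag y))) (val (tagged y)) (s (tag y))
             then tag y else ordS (tag y)
  end.

Lemma anchor_neck_map F i a : (anchor F (nm i a) == i) || (anchor F (nm i a) == ordS i).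
Proof.
move: a; apply: (@eq_neck_map _ i (fun x => (anchor F x == i) || (anchor F x == ordS i))
                               (fun _ => true)) => [||a' ia'] /=; rewrite ?eqxx ?orbT //.
by rewrite neck_map_inner /=; case: ifP; rewrite eqxx ?orbT.
Qed.

Lemma anchor_nonbridge F i a : ~~ bridges F i ->
  anchor F (nm i a) = if connect (adj (restr F i)) a (s i) then i else ordS i.
Proof.
move=> nb; move: a; apply: (@eq_neck_map _ i (anchor F)) => [|/=|a' ia'].
- by rewrite /= connect0.
- by rewrite connect_adjC -/(bridges F i) (negbTE nb).
- by rewrite neck_map_inner.
Qed.

Lemma connect_anchor F x y :
  connect (adj F) x y -> connect (cyc (bridges F)) (anchor F x) (anchor F y).
Proof.
apply: connect_homo => x' y' /adj_necklaceP [i [a [b [ab -> ->]]]].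
have [bi|nbi] := boolP (bridges F i).
  have cycle_i k l : (k == i) || (k == ordS i) -> (l == i) || (l == ordS i) ->
      connect (cyc (bridges F)) k l.
    by move=> /orP[] /eqP-> /orP[] /eqP->; rewrite ?connect0 //;
       apply: connect1; rewrite /cyc bi eqxx ?orbT.
  exact: cycle_i (anchor_neck_map F a) (anchor_neck_map F b).
rewrite !anchor_nonbridge // (same_connect1 (@connect_adjC _ _) ab).
exact: connect0.
Qed.

Lemma connect_pins F i0 : (forall j, j != i0 -> bridges F j) ->
  forall k l, connect (adj F) (inl k) (inl l).
Proof.
move=> bF k l; apply: (@connect_homo _ _ (cyc (predC1 i0)) _ inl);
  last by apply: (connect_cyc_all (i0 := i0)) => j /= ->.
move=> k' l' /orP[] /andP[Sk /eqP->]; last rewrite (@connect_adjC CG).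
all: by rewrite -neck_map_s -neck_map_t; apply/connect_restr/bF.
Qed.

Lemma connect_neck_proj F k (H : mgraph) (A : {set edge H})
    (th : vert (G k) -> vert H) (rho : vert CG -> vert H) :
  (forall a b, adj (restr F k) a b -> adj A (th a) (th b)) ->
  (forall a, rho (nm k a) = th a) ->
  (forall j a b, j != k -> adj (restr F j) a b -> rho (nm j a) = rho (nm j b)) ->
  forall x y, connect (adj F) x y -> connect (adj A) (rho x) (rho y).
Proof.
move=> hth hr ho; apply: connect_homo => x y /adj_necklaceP [i [a [b [ab -> ->]]]].
have [ik|ik] := eqVneq i k; last by rewrite (ho _ _ _ ik ab) connect0.
by subst i; rewrite !hr; apply/connect1/hth.
Qed.

Definition neck_to_identify k x : vert (identify (s k) (t k)) :=
  if neck_proj k x is Some a then id_map (s k) (t k) a else None.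

Lemma neck_to_identify_map k a : neck_to_identify k (nm k a) = id_map (s k) (t k) a.
Proof.
move: a; apply: (@eq_neck_map _ k (neck_to_identify k)) => [|| a' ia'].
- by rewrite /neck_to_identify neck_proj_pin id_map_s.
- by rewrite /neck_to_identify neck_proj_pin id_map_t.
- by rewrite /neck_to_identify neck_proj_map.
Qed.

Lemma connect_neck_identify F k x y : connect (adj F) x y ->
  connect (@adj (identify (s k) (t k)) (restr F k))
          (neck_to_identify k x) (neck_to_identify k y).
Proof.
apply: connect_neck_proj => [a b|a|j a b jk _]; first exact: adj_identify.
  exact: neck_to_identify_map.
by rewrite /neck_to_identify !neck_proj_other.
Qed.

Lemma restr_acyclic F i : acyclic F -> acyclic (restr F i).
Proof.
move=> acF; apply/acyclicP => e eF; rewrite in_restr in eF.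
apply: contra (acyclicP _ acF _ eF) => c.
by apply: connect_restr; rewrite restr_setD1.
Qed.

Lemma restr_reaches F i a : spans_connected F -> reaches (restr F i) (s i) (t i) a.
Proof.
move/spans_connectedP => cF.
have := connect_neck_identify i (cF (nm i a) (inl i)).
rewrite neck_to_identify_map /neck_to_identify neck_proj_pin -(id_map_s (s i) (t i)).
by case/connect_identify_lift/orP => [c|/andP[]//]; rewrite /reaches c.
Qed.

(* If every copy bridged, the first edge of an [s_j t_j]-path in copy [j]
   would close a cycle around the necklace. *)
Lemma acyclic_nonbridge F : 0 < n -> acyclic F -> exists i, ~~ bridges F i.
Proof.
move=> n_gt0 acF; have [/existsP //|/existsPn bF] := boolP [exists i, ~~ bridges F i].
pose j0 : 'I_n := Ordinal n_gt0.
have [e [v [eF He cv]]] := connect_first_edge (st j0) (negbNE (bF j0)).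
rewrite in_restr in eF; case/negP: (acyclicP _ acF _ eF) => /=.
have : connect (adj (F :\ copy_edge e)) (nm j0 v) (nm j0 (s j0)).
  rewrite neck_map_s; apply: connect_trans (connect_pins (i0 := j0) _ (ordS j0) j0).
    by rewrite -neck_map_t; apply: connect_restr; rewrite restr_setD1.
  by move=> j jj0; rewrite /bridges restr_setD1_other //; apply/negbNE/bF.
by case: He => -> //=; rewrite (@connect_adjC CG).
Qed.

Lemma nonbridge_uniq F i j : spans_connected F ->
  ~~ bridges F i -> ~~ bridges F j -> i = j.
Proof.
move/spans_connectedP => cF bi bj; apply/eqP/negPn/negP => ij.
have := connect_anchor (cF (inl i) (inl (ordS i))).
by rewrite /= (negbTE (connect_cyc_gap ij bi bj)).
Qed.

Definition cut_at i0 F := separating_forest (restr F i0) (s i0) (t i0) &&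
  [forall j, (j != i0) ==> spanning_tree (restr F j)].

Lemma cut_atP i0 F : reflect
  (separating_forest (restr F i0) (s i0) (t i0) /\
   forall j, j != i0 -> spanning_tree (restr F j)) (cut_at i0 F).
Proof.
apply: (iffP andP) => -[sep trees]; split=> //.
  by move=> j; apply/implyP/(forallP trees).
by apply/forallP => j; apply/implyP/trees.
Qed.

Lemma spanning_tree_cut_at F : 0 < n -> spanning_tree F -> exists i0, cut_at i0 F.
Proof.
move=> n_gt0 /andP[cF acF]; have [i0 bi0] := acyclic_nonbridge n_gt0 acF.
exists i0; apply/cut_atP; split.
  by rewrite /separating_forest restr_acyclic // bi0; apply/forallP => a; apply: restr_reaches.
move=> j ji0; rewrite /spanning_tree restr_acyclic // andbT.
apply: spans_connected_reaches => [|a]; last exact: restr_reaches.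
by apply/negPn/negP => bj; rewrite (nonbridge_uniq cF bj bi0) eqxx in ji0.
Qed.

Lemma cut_at_spans i0 F : cut_at i0 F -> spans_connected F.
Proof.
case/cut_atP => sep trees.
have reach j : forall a, reaches (restr F j) (s j) (t j) a.
  have [->|ji0] := eqVneq j i0; first by case/and3P: sep => _ _ /forallP.
  by case/andP: (trees j ji0) => /spans_connectedP c _ a; rewrite /reaches c.
have bF j : j != i0 -> bridges F j.
  by move=> ji0; case/andP: (trees j ji0) => /spans_connectedP c _; apply: c.
apply: (@spans_connected_hub CG F (inl i0)) => x; have [j [a <-]] := neck_map_surj x.
case/orP: (reach j a) => /connect_restr c; apply: connect_trans c _;
by rewrite ?neck_map_s ?neck_map_t; apply: connect_pins bF _ _.
Qed.

(* Fold the rest of the necklace onto the merged vertex of G_(i0, s t). *)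
Lemma cut_at_acyclic_self i0 F (e : edge (G i0)) : cut_at i0 F -> copy_edge e \in F ->
  ~~ connect (adj (F :\ copy_edge e)) (nm i0 (ends e).1) (nm i0 (ends e).2).
Proof.
case/cut_atP => /and3P[acA nst _] _ eF; rewrite -in_restr in eF.
have acH : @acyclic (identify (s i0) (t i0)) (restr F i0).
  by rewrite acyclic_identify // acA.
apply/negP => /(connect_neck_identify i0); rewrite restr_setD1 !neck_to_identify_map.
by move: (acyclicP _ acH e eF) => /negP.
Qed.

(* For an edge of a spanning-tree copy [i], the rest of the necklace does not
   join [p_i] to [p_(i+1)], so a path can be folded back into copy [i]. *)
Lemma cut_at_acyclic_other i0 i F (e : edge (G i)) : i != i0 -> cut_at i0 F ->
  copy_edge e \in F ->
  ~~ connect (adj (F :\ copy_edge e)) (nm i (ends e).1) (nm i (ends e).2).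
Proof.
move=> ii0 /cut_atP[/and3P[_ nst _] trees] eF; rewrite -in_restr in eF.
pose Fm := [set z in F | tag z != i].
have restr_Fm j : restr Fm j = if j == i then set0 else restr F j.
  by apply/setP => e'; rewrite !inE /copy_edge /=; case: (j == i); rewrite ?inE ?andbF ?andbT.
pose T x := connect (adj Fm) x (inl (ordS i)).
have nT : ~~ T (inl i).
  have bi : ~~ bridges Fm i.
    by rewrite /bridges restr_Fm eqxx; apply/negP => /connect_set0/eqP; apply/negP/st.
  have bi0 : ~~ bridges Fm i0 by rewrite /bridges restr_Fm eq_sym (negbTE ii0).
  by apply: contra (connect_cyc_gap ii0 bi bi0) => /connect_anchor.
pose rho x := if neck_proj i x is Some a then a else if T x then t i else s i.
have rho_map a : rho (nm i a) = a.
  move: a; apply: (@eq_neck_map _ i rho) => [||a ia]; rewrite /rho ?neck_proj_pin.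
  - by rewrite (negbTE nT).
  - by rewrite /T connect0.
  - by rewrite neck_proj_map.
have rho_other j a b : j != i -> adj (restr (F :\ copy_edge e) j) a b ->
    rho (nm j a) = rho (nm j b).
  move=> ji; rewrite restr_setD1_other // => ab; rewrite /rho !neck_proj_other //.
  have ab' : adj Fm (nm j a) (nm j b) by apply: adj_restr; rewrite restr_Fm (negbTE ji).
  by rewrite /T (same_connect1 (@connect_adjC _ _) ab').
have fold x y : connect (adj (F :\ copy_edge e)) x y ->
    connect (adj (restr F i :\ e)) (rho x) (rho y).
  by apply: (connect_neck_proj _ rho_map rho_other) => a b; rewrite restr_setD1.
case/andP: (trees i ii0) => _ /acyclicP/(_ e eF).
by apply: contra => /fold; rewrite !rho_map.
Qed.

Lemma cut_at_spanning_tree i0 F : cut_at i0 F -> spanning_tree F.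
Proof.
move=> cut; rewrite /spanning_tree (cut_at_spans cut); apply/acyclicP => -[i e] eF.
have [ii0|ii0] := eqVneq i i0; last exact: cut_at_acyclic_other ii0 cut eF.
by subst i; apply: cut_at_acyclic_self cut eF.
Qed.

Lemma cut_at_uniq i j F : cut_at i F -> cut_at j F -> i = j.
Proof.
case/cut_atP => /and3P[_ bi _] _ /cut_atP[_ trees].
apply/eqP/negPn/negP => ij; have /andP[/spans_connectedP c _] := trees i ij.
by rewrite c in bi.
Qed.

Lemma spanning_tree_cut_count F : 0 < n ->
  (spanning_tree F : nat) = \sum_i (cut_at i F : nat).
Proof.
move=> n_gt0; have [tree|ntree] := boolP (spanning_tree F).
  have [i0 cut] := spanning_tree_cut_at n_gt0 tree.
  rewrite (bigD1 i0) //= cut big1 // => j ji0.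
  by apply/eqP; rewrite eqb0; apply: contra ji0 => /cut_at_uniq/(_ cut) ->.
by rewrite big1 // => j _; apply/eqP; rewrite eqb0; apply: contra ntree => /cut_at_spanning_tree.
Qed.

Definition restr_family F : {dffun forall j, {set edge (G j)}} := [ffun j => restr F j].

Definition glue (f : {dffun forall j, {set edge (G j)}}) : {set edge CG} :=
  [set z | tagged z \in f (tag z)].

Lemma restr_glue f j : restr (glue f) j = f j.
Proof. by apply/setP => e; rewrite !inE. Qed.

Lemma restr_family_inj : injective restr_family.
Proof.
move=> F F' /ffunP E; apply/setP => -[j e].
by have /setP/(_ e) := E j; rewrite !ffunE !in_restr.
Qed.

Lemma card_cut_at i0 : #|[set F | cut_at i0 F]| =
  ntrees (identify (s i0) (t i0)) * \prod_(j | j != i0) ntrees (G j).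
Proof.
pose A j : {set {set edge (G j)}} :=
  [set B | if j == i0 then separating_forest B (s j) (t j) else spanning_tree B].
have E : restr_family @: [set F | cut_at i0 F] = setXn A.
  apply/setP => f; rewrite in_setXn; apply/imsetP/forallP => [[F]|Af].
    rewrite inE => /cut_atP[sep trees] -> j; rewrite ffunE inE.
    by have [->|ji0] := eqVneq j i0; [exact: sep | exact: trees].
  exists (glue f); last by apply/ffunP => j; rewrite ffunE restr_glue.
  rewrite inE; apply/cut_atP; split; first by have := Af i0; rewrite inE eqxx restr_glue.
  by move=> j ji0; have := Af j; rewrite inE (negbTE ji0) restr_glue.
rewrite -(card_imset _ restr_family_inj) E cardsXn (bigD1 i0) //=; congr (_ * _).
  by apply: eq_card => B; rewrite !inE eqxx spanning_tree_identify.
by apply: eq_bigr => j ji0; apply: eq_card => B; rewrite !inE (negbTE ji0).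
Qed.

Lemma ntrees_necklace : 0 < n -> ntrees CG =
  \sum_i ntrees (identify (s i) (t i)) * \prod_(j | j != i) ntrees (G j).
Proof.
move=> n_gt0; rewrite /ntrees card_set_nat.
under eq_bigr do rewrite spanning_tree_cut_count //.
rewrite exchange_big; apply: eq_bigr => i _.
by rewrite -card_cut_at card_set_nat.
Qed.

End Necklace.

Local Open Scope ring_scope.

Theorem theorem4p12 :
  (forall (n : nat) (G : 'I_n -> mgraph) (s t : forall i, vert (G i)),
     (2 <= n)%N ->
     (forall i, connected (G i)) ->
     (forall i, s i != t i) ->
     (ntrees (@necklace n G s t))%:R =
       (\prod_(i < n) (ntrees (G i))%:R : rat) *
       \sum_(i < n) (ntrees (identify (s i) (t i)))%:R / (ntrees (G i))%:R)
  /\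
  (forall (n : nat) (G : mgraph) (s t : vert G),
     (2 <= n)%N ->
     connected G ->
     s != t ->
     ntrees (@necklace n (fun _ => G) (fun _ => s) (fun _ => t)) =
       (n * ntrees G ^ n.-1 * ntrees (identify s t))%N).
Proof.
split=> n G s t n2 cG st.
  rewrite (ntrees_necklace st (ltnW n2)) natr_sum mulr_sumr; apply: eq_bigr => i _.
  have tGi : (ntrees (G i))%:R != 0 :> rat by rewrite pnatr_eq0 -lt0n ntrees_gt0.
  rewrite natrM natr_prod [X in _ = X * _](bigD1 i) //=.
  by rewrite mulrAC mulrCA mulfV // mulr1.
rewrite (ntrees_necklace (fun _ => st) (ltnW n2)).
under eq_bigr => i _ do
  rewrite -[X in (_ * X)%N]/(\prod_(j in predC1 i) ntrees G)%N prod_nat_const cardC1 card_ord.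
by rewrite sum_nat_const card_ord mulnA mulnAC.
Qed.
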